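(* (Assuming ZFC.) There exists a duplicated category of sets $(\mathcal{S},\widehat{\mathcal{S}},\sigma,\tau,\iota)$ which satisfies the compactness axiom.
   Context: A duplicated category of sets is a quintet $(\mathcal{S},\widehat{\mathcal{S}},\sigma,\tau,\iota)$ such that: (i) $\mathcal{S}$ and $\widehat{\mathcal{S}}$ are categories satisfying Lawvere's axioms of the Elementary Theory of the Category of Sets (ETCS), i.e. each is a well-pointed topos with a natural numbers object satisfying the axiom of choice; (ii) $\sigma:\mathcal{S}\to\widehat{\mathcal{S}}$ is a functor preserving all finite limits, the subobject classifier $2$, exponentials and natural numbers objects; (iii) $\tau:\mathcal{S}\to\widehat{\mathcal{S}}$ is a functor preserving all finite limits; (iv) $\iota:\sigma\to\tau$ is a natural transformation such that $\iota_X=\mathrm{id}_{\sigma(X)}=\mathrm{id}_{\tau(X)}$ for every finite object $X$ of $\mathcal{S}$ (so $\sigma(1)=\tau(1)=1$ and $\sigma(2)=\tau(2)=2$). A morphism $F:\tau(A)\to\tau(B)$ is standard if $F=\tau(f)$ for some $f:A\to B$ in $\mathcal{S}$; a subobject of $\tau(X)$ is standard if its characteristic map $\tau(X)\to 2=\tau(2)$ is standard. The compactness axiom: for all objects $\Lambda,X$ of $\mathcal{S}$ and every morphism $A:\sigma(\Lambda)\to 2^{\tau(X)}$ in $\widehat{\mathcal{S}}$, writing $A_\lambda\subseteq\tau(X)$ for the subobject classified by the transpose of $A\circ\lambda$ for each global element $\lambda:1\to\sigma(\Lambda)$, if every $A_\lambda$ is standard and for every finite subobject $F\hookrightarrow\Lambda$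 in $\mathcal{S}$ there is a global element of $\tau(X)$ lying in $A_\lambda$ for all $\lambda$ factoring through $\sigma(F)$, then there is a global element of $\tau(X)$ lying in $A_\lambda$ for all global elements $\lambda$ of $\sigma(\Lambda)$. *)

Set Implicit Arguments.
Unset Strict Implicit.

(** * Categories (morphisms compared with Leibniz equality) *)
Record Category := {
  Ob :> Type;
  Hom : Ob -> Ob -> Type;
  idm : forall a : Ob, Hom a a;
  comp : forall a b c : Ob, Hom b c -> Hom a b -> Hom a c;
  comp_idl : forall a b (f : Hom a b), comp (idm b) f = f;
  comp_idr : forall a b (f : Hom a b), comp f (idm a) = f;
  comp_assoc : forall a b c d (f : Hom a b) (g : Hom b c) (h : Hom c d),
      comp h (comp g f) = comp (comp h g) f }.

Arguments Hom {c0} a b.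
Arguments idm {c0} a.
Arguments comp {c0 a b c} g f.

Declare Scope cat_scope.
Notation "g ⊚ f" := (comp g f) (at level 40, left associativity) : cat_scope.
Local Open Scope cat_scope.

Definition eq_hom {C : Category} {a b : C} (e : a = b) : Hom a b :=
  match e in _ = y return Hom a y with eq_refl => idm a end.

Section Basic.
Variable C : Category.

Definition mono {a b : C} (f : Hom a b) : Prop :=
  forall z (g h : Hom z a), f ⊚ g = f ⊚ h -> g = h.

Definition epi {a b : C} (f : Hom a b) : Prop :=
  forall z (g h : Hom b z), g ⊚ f = h ⊚ f -> g = h.

Definition iso {a b : C} (f : Hom a b) : Prop :=
  exists g : Hom b a, g ⊚ f = idm a /\ f ⊚ g = idm b.

Definition is_terminal (t : C) : Prop :=
  forall a : C, exists f : Hom a t, forall g : Hom a t, g = f.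

Definition is_initial (i : C) : Prop :=
  forall a : C, exists f : Hom i a, forall g : Hom i a, g = f.

Definition is_pullback {P A B Z : C} (p1 : Hom P A) (p2 : Hom P B)
    (f : Hom A Z) (g : Hom B Z) : Prop :=
  f ⊚ p1 = g ⊚ p2 /\
  forall Q (q1 : Hom Q A) (q2 : Hom Q B), f ⊚ q1 = g ⊚ q2 ->
    exists! u : Hom Q P, p1 ⊚ u = q1 /\ p2 ⊚ u = q2.

Definition is_product {P A B : C} (p1 : Hom P A) (p2 : Hom P B) : Prop :=
  forall Q (q1 : Hom Q A) (q2 : Hom Q B),
    exists! u : Hom Q P, p1 ⊚ u = q1 /\ p2 ⊚ u = q2.

(** E is an exponential B^A with evaluation ev : E x A -> B, where the
    product E x A is given by the product cone (P, p1, p2). *)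
Definition is_exponential {A B E P : C} (p1 : Hom P E) (p2 : Hom P A)
    (ev : Hom P B) : Prop :=
  is_product p1 p2 /\
  forall Z Q (q1 : Hom Q Z) (q2 : Hom Q A), is_product q1 q2 ->
    forall f : Hom Q B,
      exists! g : Hom Z E,
        exists u : Hom Q P, p1 ⊚ u = g ⊚ q1 /\ p2 ⊚ u = q2 /\ ev ⊚ u = f.

Definition is_subobject_classifier (t Om : C) (tr : Hom t Om) : Prop :=
  forall A X (m : Hom A X), mono m ->
    exists! chi : Hom X Om, exists k : Hom A t, is_pullback m k chi tr.

Definition is_nno (t N : C) (z : Hom t N) (s : Hom N N) : Prop :=
  forall X (x0 : Hom t X) (f : Hom X X),
    exists! u : Hom N X, u ⊚ z = x0 /\ u ⊚ s = f ⊚ u.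

Definition finite_obj (X : C) : Prop :=
  forall m : Hom X X, mono m -> iso m.

End Basic.

Arguments is_subobject_classifier {C} t Om tr.
Arguments is_nno {C} t N z s.
Arguments finite_obj {C} X.
Arguments is_terminal {C} t.
Arguments is_initial {C} i.

(** * Models of Lawvere's ETCS: well-pointed toposes with NNO and choice *)
Record ETCS := {
  ecat :> Category;
  one : ecat;
  bang : forall a : ecat, Hom a one;
  bang_unique : forall a (g : Hom a one), g = bang a;
  has_pullbacks : forall A B Z : ecat,
      forall (f : Hom A Z) (g : Hom B Z),
      exists P (p1 : Hom P A) (p2 : Hom P B), is_pullback p1 p2 f g;
  has_exponentials : forall A B : ecat,
      exists E P (p1 : Hom P E) (p2 : Hom P A) (ev : Hom P B),
        is_exponential p1 p2 ev;
  Omega : ecat;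
  true_ : Hom one Omega;
  Omega_classifier : is_subobject_classifier one Omega true_;
  has_nno : exists N (z : Hom one N) (s : Hom N N), is_nno one N z s;
  well_pointed : forall a b (f g : Hom a b),
      (forall x : Hom one a, f ⊚ x = g ⊚ x) -> f = g;
  nondegenerate : ~ is_initial one;
  choice : forall (a b : ecat) (e : Hom a b), epi e -> exists s : Hom b a, e ⊚ s = idm b }.

Record Functor (C D : Category) := {
  fobj :> C -> D;
  fmap : forall a b : C, Hom a b -> Hom (fobj a) (fobj b);
  fmap_id : forall a, fmap (idm a) = idm (fobj a);
  fmap_comp : forall a b c (f : Hom a b) (g : Hom b c),
      fmap (g ⊚ f) = fmap g ⊚ fmap f }.

Arguments fmap {C D} f0 {a b} f.

(** preservation of finite limits = of terminal objects and pullbacks *)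
Definition preserves_finite_limits {C D : Category} (F : Functor C D) : Prop :=
  (forall t : C, is_terminal t -> is_terminal (F t)) /\
  (forall P A B Z (p1 : Hom P A) (p2 : Hom P B) (f : Hom A Z) (g : Hom B Z),
      is_pullback p1 p2 f g ->
      is_pullback (fmap F p1) (fmap F p2) (fmap F f) (fmap F g)).

Definition preserves_exponentials {C D : Category} (F : Functor C D) : Prop :=
  forall (A B E P : C) (p1 : Hom P E) (p2 : Hom P A) (ev : Hom P B),
    is_exponential p1 p2 ev ->
    is_exponential (fmap F p1) (fmap F p2) (fmap F ev).

Definition preserves_nno {C D : Category} (F : Functor C D) : Prop :=
  forall (t N : C) (z : Hom t N) (s : Hom N N),
    is_terminal t -> is_nno t N z s -> is_nno (F t) (F N) (fmap F z) (fmap F s).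

(** * Duplicated categories of sets *)
Record DupCat := {
  S : ETCS;
  Sh : ETCS;
  sigma : Functor S Sh;
  tau : Functor S Sh;
  iota : forall X : S, Hom (sigma X) (tau X);
  sigma_lim : preserves_finite_limits sigma;
  sigma_one : sigma (one S) = one Sh;
  sigma_Omega : sigma (Omega S) = Omega Sh;
  sigma_true : eq_hom sigma_Omega ⊚ fmap sigma (true_ S)
               = true_ Sh ⊚ eq_hom sigma_one;
  sigma_exp : preserves_exponentials sigma;
  sigma_nno : preserves_nno sigma;
  tau_lim : preserves_finite_limits tau;
  tau_one : tau (one S) = one Sh;
  tau_Omega : tau (Omega S) = Omega Sh;
  iota_nat : forall X Y (f : Hom X Y),
      iota Y ⊚ fmap sigma f = fmap tau f ⊚ iota X;
  iota_finite : forall X : S, finite_obj X ->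
      exists e : sigma X = tau X, iota X = eq_hom e }.

Definition standard (D : DupCat) {A B : S D} (F : Hom (tau D A) (tau D B)) : Prop :=
  exists f : Hom A B, fmap (tau D) f = F.

Definition standard_char (D : DupCat) {X : S D} (chi : Hom (tau D X) (Omega (Sh D))) : Prop :=
  exists f : Hom X (Omega (S D)), eq_hom (tau_Omega D) ⊚ fmap (tau D) f = chi.

(** chi : Y -> 2 is the transpose of the global element g : 1 -> E of the
    exponential E = 2^Y (with product cone (P,p1,p2) and evaluation ev) *)
Definition transpose_of {C : ETCS} {Y E P : C} (p1 : Hom P E) (p2 : Hom P Y)
    (g : Hom (one C) E) (ev : Hom P (Omega C)) (chi : Hom Y (Omega C)) : Prop :=
  exists u : Hom Y P, p1 ⊚ u = g ⊚ bang Y /\ p2 ⊚ u = idm Y /\ ev ⊚ u = chi.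

Definition lies_in {C : ETCS} {Y : C} (x : Hom (one C) Y) (chi : Hom Y (Omega C)) : Prop :=
  chi ⊚ x = true_ C.

Definition compactness (D : DupCat) : Prop :=
  forall (Lam X : S D) (E P : Sh D) (p1 : Hom P E) (p2 : Hom P (tau D X))
         (ev : Hom P (Omega (Sh D))),
    is_exponential p1 p2 ev ->
    forall A : Hom (sigma D Lam) E,
      (* every A_lambda is standard *)
      (forall (l : Hom (one (Sh D)) (sigma D Lam)) chi,
          transpose_of p1 p2 (A ⊚ l) ev chi -> standard_char chi) ->
      (* finite intersection property *)
      (forall (F : S D) (m : Hom F Lam), mono m -> finite_obj F ->
          exists x : Hom (one (Sh D)) (tau D X),
            forall (l : Hom (one (Sh D)) (sigma D Lam)) chi,
              (exists y : Hom (one (Sh D)) (sigma D F), fmap (sigma D) m ⊚ y = l) ->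
              transpose_of p1 p2 (A ⊚ l) ev chi -> lies_in x chi) ->
      exists x : Hom (one (Sh D)) (tau D X),
        forall (l : Hom (one (Sh D)) (sigma D Lam)) chi,
          transpose_of p1 p2 (A ⊚ l) ev chi -> lies_in x chi.

(* Small sets are the types of a universe w and large sets those of a larger universe v;
   sigma is the inclusion, and tau sends an infinite small set X to an ultrapower X^J/U while
   keeping finite ones unchanged.  The index set J consists of the finite lists of pairs (Y, P)
   of a small type Y and a predicate P on Y, and U is an ultrafilter containing every cone
   {j | (Y, P) in j}.  Such an ultrapower is saturated for small families: if a family of
   predicates on X has the finite intersection property, choosing for each j a common point of
   the members of the family listed in j gives an element of X^J/U satisfying every member.
   The compactness axiom is this saturation, since a standard subobject of tau X is the
   ultrapower of a predicate on X, and a point of tau X common to finitely many of them yields,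
   at some index j, a point of X common to the corresponding predicates. *)

From Pilot Require Import Defs.
From Stdlib Require Import FunctionalExtensionality ProofIrrelevance PropExtensionality
  ClassicalEpsilon Classical List FinFun.
From mathcomp Require all_boot classical_sets filter.
Local Open Scope cat_scope.

(** * Choice, finite lists and Dedekind finiteness *)

Lemma unique_choice {A B : Type} (R : A -> B -> Prop) :
  (forall a, exists! b, R a b) -> exists! f : A -> B, forall a, R a (f a).
Proof.
intros HR. destruct (choice R) as [f Hf].
{ intros a. destruct (HR a) as [b [Hb _]]. exists b; exact Hb. }
exists f. split; [exact Hf|]. intros g Hg. apply functional_extensionality; intros a.
destruct (HR a) as [b [_ Hu]]. transitivity b; [symmetry|]; apply Hu; auto.
Qed.

Lemma list_witnesses {A B : Type} (R : A -> B -> Prop) (l : list A) :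
  (forall a, In a l -> exists b, R a b) ->
  exists l' : list B, forall a, In a l -> exists b, In b l' /\ R a b.
Proof.
induction l as [|a l IH]; intros H.
- exists nil. intros a [].
- destruct (H a (or_introl eq_refl)) as [b Hb].
  destruct IH as [l' Hl']; [intros a' Ha'; apply H; right; exact Ha'|].
  exists (b :: l'). intros a0 [<-|Ha0].
  + exists b. split; [left|]; auto.
  + destruct (Hl' a0 Ha0) as [b' [Hb' Rb']]. exists b'. split; [right|]; auto.
Qed.

Lemma list_functional_image {A B : Type} (R : A -> B -> Prop) (l : list A) :
  (forall a b b', R a b -> R a b' -> b = b') ->
  exists l' : list B, forall b, In b l' <-> exists a, In a l /\ R a b.
Proof.
intros Hfun. induction l as [|a l [l' Hl']].
- exists nil. intros b. split; [intros []|intros [a [[] _]]].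
- destruct (classic (exists b, R a b)) as [[b Hb]|Hn]; [exists (b :: l') | exists l'];
    intros b'; simpl; rewrite Hl'; split.
  + intros [<-|[a' [Ha' Rb']]]; [exists a|exists a']; simpl; auto.
  + intros [a' [[Ea|Ha'] Rb']]; [subst a'; left; exact (Hfun _ _ _ Hb Rb') | right; eauto].
  + intros [a' [Ha' Rb']]. exists a'. simpl; auto.
  + intros [a' [[Ea|Ha'] Rb']]; [subst a'; exfalso; eauto | eauto].
Qed.

Lemma finite_in_list {T : Type} (l : list T) : Finite {x | In x l}.
Proof.
assert (K : forall k, incl k l ->
          exists l' : list {x | In x l}, forall y, In (proj1_sig y) k -> In y l').
{ induction k as [|a k IH]; intros Hk.
  - exists nil. intros y [].
  - destruct IH as [l' Hl']; [intros z Hz; apply Hk; right; exact Hz|].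
    exists (exist _ a (Hk a (or_introl eq_refl)) :: l'). intros [y Hy] [E|E]; simpl in E.
    + left. subst. apply subset_eq_compat. reflexivity.
    + right. exact (Hl' (exist _ y Hy) E). }
destruct (K l (fun z H => H)) as [l' Hl']. exists l'. intros y. apply Hl', proj2_sig.
Qed.

Lemma injective_seq_of_not_finite (X : Type) : ~ Finite X -> exists e : nat -> X, Injective e.
Proof.
intros Hinf.
assert (Hfresh : forall l : list X, exists x, ~ In x l).
{ intros l. apply not_all_ex_not. intros Hl. apply Hinf. exists l. exact Hl. }
destruct (choice _ Hfresh) as [fresh Hfr].
pose (prefix := fix prefix n :=
  match n with 0 => nil | Datatypes.S n => fresh (prefix n) :: prefix n end).
assert (Hin : forall m n, m < n -> In (fresh (prefix m)) (prefix n)).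
{ intros m n Hmn. induction Hmn; simpl; auto. }
exists (fun n => fresh (prefix n)). intros m n E.
destruct (PeanoNat.Nat.lt_trichotomy m n) as [H|[H|H]]; [exfalso| |exfalso]; auto.
- apply (Hfr (prefix n)). rewrite <- E. auto.
- apply (Hfr (prefix m)). rewrite E. auto.
Qed.

(* Hilbert's hotel: shift along an injective sequence, fix everything else. *)
Lemma injective_not_surjective_of_not_finite (X : Type) :
  ~ Finite X -> exists m : X -> X, Injective m /\ ~ Surjective m.
Proof.
intros Hinf. destruct (injective_seq_of_not_finite X Hinf) as [e He].
pose (m := fun x => match excluded_middle_informative (exists n, e n = x) with
   | left H => e (Datatypes.S (proj1_sig (constructive_indefinite_description _ H)))
   | right _ => x end).
assert (m_seq : forall n, m (e n) = e (Datatypes.S n)).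
{ intros n. unfold m. destruct (excluded_middle_informative _) as [H|H].
  - destruct (constructive_indefinite_description _ H) as [k Hk]; simpl.
    apply He in Hk. subst; auto.
  - exfalso; apply H; exists n; auto. }
assert (m_out : forall x, ~ (exists n, e n = x) -> m x = x).
{ intros x Hx. unfold m. destruct (excluded_middle_informative _) as [H|H]; [contradiction|auto]. }
exists m. split.
- intros x y E.
  destruct (classic (exists n, e n = x)) as [[n <-]|Hx];
  destruct (classic (exists n, e n = y)) as [[k <-]|Hy].
  + rewrite !m_seq in E. apply He in E. congruence.
  + rewrite m_seq, (m_out _ Hy) in E. exfalso; apply Hy; eauto.
  + rewrite m_seq, (m_out _ Hx) in E. exfalso; apply Hx; eauto.
  + rewrite (m_out _ Hx), (m_out _ Hy) in E; auto.
- intros Hs. destruct (Hs (e 0)) as [x Hx].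
  destruct (classic (exists n, e n = x)) as [[n <-]|Hn].
  + rewrite m_seq in Hx. apply He in Hx. discriminate.
  + rewrite (m_out _ Hn) in Hx. apply Hn; eauto.
Qed.

Lemma finite_of_injective_surjective (X : Type) :
  (forall m : X -> X, Injective m -> Surjective m) -> Finite X.
Proof.
intros H. apply NNPP. intros Hinf.
destruct (injective_not_surjective_of_not_finite X Hinf) as [m [Hi Hs]]. exact (Hs (H m Hi)).
Qed.

(** * The category of sets of a universe *)

Set Universe Polymorphism.

Definition SetCat@{u} : Category.
refine {| Ob := Type@{u}; Hom := fun a b => a -> b; idm := fun a x => x;
          Defs.comp := fun a b c g f x => g (f x) |}; reflexivity.
Defined.

Definition set_product {P A B : Type} (p1 : P -> A) (p2 : P -> B) : Prop :=
  forall a b, exists! p, p1 p = a /\ p2 p = b.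

Definition set_pullback {P A B Z : Type} (p1 : P -> A) (p2 : P -> B) (f : A -> Z) (g : B -> Z) :
    Prop :=
  (forall p, f (p1 p) = g (p2 p)) /\ forall a b, f a = g b -> exists! p, p1 p = a /\ p2 p = b.

Definition set_exponential {A B E P : Type} (p1 : P -> E) (p2 : P -> A) (ev : P -> B) : Prop :=
  set_product p1 p2 /\ forall h : A -> B, exists! e, forall p, p1 p = e -> ev p = h (p2 p).

Definition set_nno {t N : Type} (z : t -> N) (s : N -> N) : Prop :=
  exists t0 : t, (forall y, y = t0) /\ forall y : N, exists! n : nat, Nat.iter n s (z t0) = y.

Lemma set_product_jointly_injective {P A B : Type} {p1 : P -> A} {p2 : P -> B} :
  set_product p1 p2 -> forall p p', p1 p = p1 p' -> p2 p = p2 p' -> p = p'.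
Proof.
intros H p p' E1 E2. destruct (H (p1 p') (p2 p')) as [p0 [_ Hu]].
transitivity p0; [symmetry|]; apply Hu; auto.
Qed.

Lemma set_pullback_jointly_injective {P A B Z : Type} {p1 : P -> A} {p2 : P -> B}
    {f : A -> Z} {g : B -> Z} :
  set_pullback p1 p2 f g -> forall p p', p1 p = p1 p' -> p2 p = p2 p' -> p = p'.
Proof.
intros [Hc Hu] p p' E1 E2. destruct (Hu (p1 p') (p2 p') (Hc p')) as [p0 [_ H]].
transitivity p0; [symmetry|]; apply H; auto.
Qed.

Section SetCatLimits.
Universe u.

Lemma set_mono_iff (a b : SetCat@{u}) (m : Hom a b) : mono m <-> Injective m.
Proof.
split.
- intros H x y E.
  assert (Exy := H unit (fun _ => x) (fun _ => y) (functional_extensionality _ _ (fun _ => E))).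
  exact (equal_f Exy tt).
- intros H z g h E. apply functional_extensionality; intros t. apply H, (equal_f E t).
Qed.

Lemma set_iso_iff (a b : SetCat@{u}) (m : Hom a b) : iso m <-> Bijective m.
Proof.
split.
- intros [g [H1 H2]]. exists g. split; [exact (equal_f H1) | exact (equal_f H2)].
- intros [g [H1 H2]]. exists g. split; apply functional_extensionality; assumption.
Qed.

Lemma set_epi_surjective (a b : SetCat@{u}) (e : Hom a b) : epi e -> Surjective e.
Proof.
intros He y.
assert (Im : (fun y => exists x, e x = y) = (fun _ : b => True)).
{ apply (He Prop). apply functional_extensionality; intros x. simpl.
  apply propositional_extensionality. split; [auto | intros _; exists x; reflexivity]. }
rewrite (equal_f Im y). exact I.
Qed.

Lemma set_terminal_iff (t : SetCat@{u}) : is_terminal t <-> exists t0 : t, forall y, y = t0.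
Proof.
split.
- intros H. destruct (H unit) as [f Hf]. exists (f tt). intros y.
  exact (equal_f (Hf (fun _ => y)) tt).
- intros [t0 H] a. exists (fun _ => t0). intros g. apply functional_extensionality; intros; apply H.
Qed.

Lemma set_unique_mediator_iff {P A B : SetCat@{u}} (p1 : Hom P A) (p2 : Hom P B)
    (C : A -> B -> Prop) :
  (forall (Q : SetCat@{u}) (q1 : Hom Q A) (q2 : Hom Q B), (forall q, C (q1 q) (q2 q)) ->
     exists! m : Hom Q P, p1 ⊚ m = q1 /\ p2 ⊚ m = q2)
  <-> (forall a b, C a b -> exists! p, p1 p = a /\ p2 p = b).
Proof.
split.
- intros H a b Cab.
  destruct (H unit (fun _ => a) (fun _ => b) (fun _ => Cab)) as [m [[M1 M2] Mu]].
  exists (m tt). split; [split; [exact (equal_f M1 tt) | exact (equal_f M2 tt)]|].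
  intros p [<- <-]. exact (equal_f (Mu (fun _ => p) (conj eq_refl eq_refl)) tt).
- intros H Q q1 q2 Cq.
  destruct (unique_choice (fun q p => p1 p = q1 q /\ p2 p = q2 q)) as [m [Hm Mu]].
  { intros q. apply H, Cq. }
  exists m. split.
  + split; apply functional_extensionality; intros q; apply Hm.
  + intros m' [E1 E2]. apply Mu. intros q. split; [exact (equal_f E1 q) | exact (equal_f E2 q)].
Qed.

Lemma set_product_iff {P A B : SetCat@{u}} (p1 : Hom P A) (p2 : Hom P B) :
  is_product p1 p2 <-> set_product p1 p2.
Proof.
split.
- intros H a b.
  apply (proj1 (set_unique_mediator_iff p1 p2 (fun _ _ => True))); [|exact I].
  intros Q q1 q2 _. apply H.
- intros H Q q1 q2.
  apply (proj2 (set_unique_mediator_iff p1 p2 (fun _ _ => True))); [|intros; exact I].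
  intros a b _. apply H.
Qed.

Lemma set_pullback_iff {P A B Z : SetCat@{u}} (p1 : Hom P A) (p2 : Hom P B)
    (f : Hom A Z) (g : Hom B Z) :
  is_pullback p1 p2 f g <-> set_pullback p1 p2 f g.
Proof.
unfold is_pullback, set_pullback.
rewrite <- (set_unique_mediator_iff p1 p2 (fun a b => f a = g b)).
split; intros [Hc Hu]; split.
- exact (equal_f Hc).
- intros Q q1 q2 Cq. apply Hu, functional_extensionality, Cq.
- apply functional_extensionality, Hc.
- intros Q q1 q2 E. apply Hu. exact (equal_f E).
Qed.

Lemma set_transpose_iff {A B E P Z Q : SetCat@{u}} (p1 : Hom P E) (p2 : Hom P A)
    (ev : Hom P B) (q1 : Hom Q Z) (q2 : Hom Q A) (f : Hom Q B) (g : Hom Z E) :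
  set_product p1 p2 ->
  (exists m : Hom Q P, p1 ⊚ m = g ⊚ q1 /\ p2 ⊚ m = q2 /\ ev ⊚ m = f)
  <-> forall q p, p1 p = g (q1 q) -> p2 p = q2 q -> ev p = f q.
Proof.
intros Hp. split.
- intros [m [M1 [M2 M3]]] q p E1 E2.
  rewrite (set_product_jointly_injective Hp p (m q)).
  + exact (equal_f M3 q).
  + rewrite E1. symmetry. exact (equal_f M1 q).
  + rewrite E2. symmetry. exact (equal_f M2 q).
- intros H. destruct (choice (fun q p => p1 p = g (q1 q) /\ p2 p = q2 q)) as [m Hm].
  { intros q. destruct (Hp (g (q1 q)) (q2 q)) as [p [Hp' _]]. exists p; exact Hp'. }
  exists m. split; [|split]; apply functional_extensionality; intros q; try apply Hm.
  apply H; apply Hm.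
Qed.

Lemma set_exponential_of_is_exponential {A B E P : SetCat@{u}}
    (p1 : Hom P E) (p2 : Hom P A) (ev : Hom P B) :
  is_exponential p1 p2 ev -> set_exponential p1 p2 ev.
Proof.
intros [Hp Hu]. apply (set_product_iff p1 p2) in Hp. split; [exact Hp|]. intros h.
assert (Hq : is_product (C:=SetCat@{u}) (P:=A) (A:=unit) (B:=A) (fun _ => tt) (fun a => a)).
{ apply set_product_iff. intros [] a. exists a. split; [split; reflexivity|].
  intros a' [_ ->]; reflexivity. }
destruct (Hu unit A _ _ Hq h) as [g [Hg Gu]].
pose proof (proj1 (set_transpose_iff p1 p2 ev (Z:=unit) (Q:=A) (fun _ => tt) (fun a => a) h g Hp)
  Hg) as Hg'.
exists (g tt). split.
- intros p Ep. exact (Hg' (p2 p) p Ep eq_refl).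
- intros e He. assert (Eg : g = fun _ => e).
  { apply Gu, (set_transpose_iff _ _ _ _ _ _ _ Hp). intros q p E1 <-. exact (He p E1). }
  rewrite Eg. reflexivity.
Qed.

Lemma is_exponential_of_set_exponential {A B E P : SetCat@{u}}
    (p1 : Hom P E) (p2 : Hom P A) (ev : Hom P B) :
  set_exponential p1 p2 ev -> is_exponential p1 p2 ev.
Proof.
intros [Hp He]. split; [apply set_product_iff, Hp|].
intros Z Q q1 q2 Hq f. apply (set_product_iff q1 q2) in Hq.
destruct (unique_choice
  (fun z e => forall q p, q1 q = z -> p1 p = e -> p2 p = q2 q -> ev p = f q)) as [g [Hg Gu]].
{ intros z. destruct (choice (fun a q => q1 q = z /\ q2 q = a)) as [s Hs].
  { intros a. destruct (Hq z a) as [q [Hq' _]]. exists q; exact Hq'. }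
  destruct (He (fun a => f (s a))) as [e [He1 He2]].
  exists e. split.
  - intros q p <- E1 E2. rewrite (He1 p E1).
    f_equal. apply (set_product_jointly_injective Hq);
      [rewrite (proj1 (Hs _)) | rewrite (proj2 (Hs _))]; auto.
  - intros e' He'. apply He2. intros p E1. apply He'; [apply Hs | exact E1 | symmetry; apply Hs]. }
exists g. split.
- apply (set_transpose_iff _ _ _ _ _ _ _ Hp). intros q p E1 E2. exact (Hg (q1 q) q p eq_refl E1 E2).
- intros g' Hg'. apply Gu. intros z q p <- E1 E2.
  exact (proj1 (set_transpose_iff p1 p2 ev q1 q2 f g' Hp) Hg' q p E1 E2).
Qed.

Lemma set_nno_of_is_nno (t N : SetCat@{u}) (z : Hom t N) (s : Hom N N) :
  is_terminal t -> is_nno t N z s -> set_nno z s.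
Proof.
intros Ht Hn. destruct (proj1 (set_terminal_iff t) Ht) as [t0 H0].
exists t0. split; [exact H0|].
destruct (Hn nat (fun _ => 0) Datatypes.S) as [c [[C0 CS] _]].
assert (C0' : c (z t0) = 0) by exact (equal_f C0 t0).
assert (CS' : forall y, c (s y) = Datatypes.S (c y)) by exact (equal_f CS).
assert (Hc : forall n, c (Nat.iter n s (z t0)) = n).
{ induction n as [|n IH]; [exact C0'|]. simpl. rewrite CS'. congruence. }
assert (Hiter : forall y, Nat.iter (c y) s (z t0) = y).
{ destruct (Hn N z s) as [w [_ Wu]].
  assert (Eid : (fun y : N => y) = w) by (symmetry; apply Wu; split; reflexivity).
  assert (Eit : (fun y => Nat.iter (c y) s (z t0)) = w).
  { symmetry; apply Wu. split; apply functional_extensionality; intros y; simpl.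
    - rewrite (H0 y), C0'. reflexivity.
    - rewrite CS'. reflexivity. }
  intros y. exact (equal_f (eq_trans Eit (eq_sym Eid)) y). }
intros y. exists (c y). split; [apply Hiter|]. intros n <-. apply Hc.
Qed.

Lemma is_nno_of_set_nno (t N : SetCat@{u}) (z : Hom t N) (s : Hom N N) :
  set_nno z s -> is_nno t N z s.
Proof.
intros [t0 [H0 Hb]] X x0 f.
destruct (unique_choice (fun y n => Nat.iter n s (z t0) = y) Hb) as [idx [Hidx _]].
assert (Hidu : forall n, idx (Nat.iter n s (z t0)) = n).
{ intros n. destruct (Hb (Nat.iter n s (z t0))) as [m [_ Hm]].
  transitivity m; [symmetry|]; apply Hm; auto. }
exists (fun y => Nat.iter (idx y) f (x0 t0)). split.
- split; apply functional_extensionality; intros y; simpl.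
  + rewrite (H0 y). exact (f_equal (fun n => Nat.iter n f (x0 t0)) (Hidu 0)).
  + pose proof (Hidu (Datatypes.S (idx y))) as Hs. simpl in Hs. rewrite Hidx in Hs.
    rewrite Hs. reflexivity.
- intros u' [U0 US].
  assert (US' : forall y, u' (s y) = f (u' y)) by exact (equal_f US).
  apply functional_extensionality; intros y. rewrite <- (Hidx y) at 2.
  induction (idx y) as [|n IH]; simpl.
  + symmetry. exact (equal_f U0 t0).
  + rewrite US'. congruence.
Qed.

Lemma set_subobject_classifier : is_subobject_classifier (C:=SetCat@{u}) unit Prop (fun _ => True).
Proof.
intros A X m Hm. apply set_mono_iff in Hm.
exists (fun x => exists a, m a = x). split.
- exists (fun _ => tt). apply set_pullback_iff. split.
  + intros a. apply propositional_extensionality. split; [auto | intros _; exists a; reflexivity].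
  + intros x [] E. assert (Hx : exists a, m a = x) by (simpl in E; rewrite E; exact I).
    destruct Hx as [a Ha]. exists a. split; [split; [exact Ha | reflexivity]|].
    intros a' [Ha' _]. apply Hm. congruence.
- intros chi [k Hk]. apply set_pullback_iff in Hk. destruct Hk as [Hc Hu].
  apply functional_extensionality; intros x. apply propositional_extensionality. split.
  + intros [a <-]. simpl in Hc. rewrite (Hc a). exact I.
  + intros H. assert (E : chi x = True) by (apply propositional_extensionality; split; auto).
    destruct (Hu x tt E) as [a [[Ha _] _]]. exists a; exact Ha.
Qed.

Lemma set_finite_obj_iff (X : SetCat@{u}) : finite_obj X <-> Finite X.
Proof.
split.
- intros Hf. apply finite_of_injective_surjective. intros m Hm.
  apply (set_mono_iff X X m) in Hm. destruct (proj1 (set_iso_iff X X m) (Hf m Hm)) as [g [_ Hg]].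
  intros y. exists (g y). apply Hg.
- intros Hfin m Hm. apply set_mono_iff in Hm. apply set_iso_iff.
  assert (Hs : Surjective m).
  { apply (Endo_Injective_Surjective Hfin); [intros x y; apply classic | exact Hm]. }
  destruct (choice (fun y x => m x = y) Hs) as [g Hg].
  exists g. split; [intros x; apply Hm, Hg | exact Hg].
Qed.

Lemma set_pullback_exists (A B Z : SetCat@{u}) (f : Hom A Z) (g : Hom B Z) :
  exists P (p1 : Hom P A) (p2 : Hom P B), is_pullback p1 p2 f g.
Proof.
exists ({p : A * B | f (fst p) = g (snd p)} : SetCat@{u}).
exists (fun p => fst (proj1_sig p)), (fun p => snd (proj1_sig p)).
apply set_pullback_iff. split.
- intros [p Hp]; exact Hp.
- intros a b E. exists (exist _ (a, b) E). split; [split; reflexivity|].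
  intros [[a' b'] E'] [H1 H2]; simpl in *. subst. apply subset_eq_compat. reflexivity.
Qed.

Lemma set_exponential_exists (A B : SetCat@{u}) :
  exists E P (p1 : Hom P E) (p2 : Hom P A) (ev : Hom P B), is_exponential p1 p2 ev.
Proof.
exists ((A -> B) : SetCat@{u}), (((A -> B) * A)%type : SetCat@{u}).
exists fst, snd, (fun p => fst p (snd p)).
apply is_exponential_of_set_exponential. split.
- intros e a. exists (e, a). split; [split; reflexivity|].
  intros [e' a'] [H1 H2]; simpl in *; subst; reflexivity.
- intros h. exists h. split.
  + intros [e a] H; simpl in *; subst; reflexivity.
  + intros e' He'. apply functional_extensionality; intros a. symmetry.
    exact (He' (e', a) eq_refl).
Qed.

Lemma set_nno_exists :
  exists (N : SetCat@{u}) (z : Hom (unit : SetCat@{u}) N) (s : Hom N N),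
    is_nno (unit : SetCat@{u}) N z s.
Proof.
exists (nat : SetCat@{u}), (fun _ => 0), Datatypes.S.
apply is_nno_of_set_nno. exists tt. split; [intros []; reflexivity|].
assert (L : forall n, Nat.iter n Datatypes.S 0 = n) by (induction n; simpl; auto).
intros y. exists y. split; [apply L|]. intros n Hn. rewrite L in Hn. symmetry; exact Hn.
Qed.

End SetCatLimits.

Definition SetETCS@{u} : ETCS.
refine {| ecat := SetCat@{u}; one := (unit : SetCat@{u}); bang := fun a (_ : a) => tt;
          Omega := (Prop : SetCat@{u}); true_ := fun _ => True;
          has_pullbacks := set_pullback_exists; has_exponentials := set_exponential_exists;
          Omega_classifier := set_subobject_classifier; has_nno := set_nno_exists |}.
- intros a g. apply functional_extensionality; intros x. destruct (g x); reflexivity.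
- intros a b f g H. apply functional_extensionality; intros x. exact (equal_f (H (fun _ => x)) tt).
- intros Hi. destruct (Hi (Empty_set : SetCat@{u})) as [f _]. destruct (f tt).
- intros a b e He. apply set_epi_surjective in He.
  destruct (choice (fun y x => e x = y) He) as [s Hs].
  exists s. apply functional_extensionality; exact Hs.
Defined.
Unset Universe Polymorphism.

(** * Ultrafilters and ultrapowers *)

Record is_ultrafilter {I : Type} (U : (I -> Prop) -> Prop) : Prop := {
  ultra_mono : forall A B : I -> Prop, (forall i, A i -> B i) -> U A -> U B;
  ultra_and : forall A B : I -> Prop, U A -> U B -> U (fun i => A i /\ B i);
  ultra_inhabited : forall A : I -> Prop, U A -> exists i, A i;
  ultra_or_not : forall A : I -> Prop, U A \/ U (fun i => ~ A i) }.
Arguments ultra_mono {I U}.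
Arguments ultra_and {I U}.
Arguments ultra_inhabited {I U} _ {A}.
Arguments ultra_or_not {I U}.

Module UltrafilterLemma.
Import all_boot classical_sets filter.

Lemma ultrafilter_extending (T : Type) (F : (T -> Prop) -> Prop) :
  F (fun _ => True) ->
  (forall A B : T -> Prop, (forall x, A x -> B x) -> F A -> F B) ->
  (forall A B, F A -> F B -> F (fun x => A x /\ B x)) ->
  (forall A, F A -> exists x, A x) ->
  exists U, is_ultrafilter U /\ forall A, F A -> U A.
Proof.
move=> FT FS FI Fne.
have PF : ProperFilter F.
  apply: Build_ProperFilter_ex; first by move=> P /Fne.
  split; first exact: FT.
  - by move=> A B FA FB; exact: (FI _ _ FA FB).
  - by move=> P Q PQ; apply: FS.
have [G [GU sFG]] := ultraFilterLemma PF.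
exists G; split; last by move=> A /sFG.
split.
- by move=> A B AB GA; apply: (filterS _ GA) => x /AB.
- by move=> A B GA GB; exact: (filterI GA GB).
- move=> A GA; have [x Ax] := filter_ex GA; by exists x.
- by move=> A; have := in_ultra_setVsetC A GU.
Qed.
End UltrafilterLemma.

Section Ultrafilter.
Context {I : Type} {U : (I -> Prop) -> Prop} (U_ultra : is_ultrafilter U).

Lemma ultra_all (A : I -> Prop) : (forall i, A i) -> U A.
Proof.
intros HA. destruct (ultra_or_not U_ultra (fun _ => False)) as [H|H].
- destruct (ultra_inhabited U_ultra H) as [_ []].
- apply (ultra_mono U_ultra _ _ (fun i _ => HA i) H).
Qed.

Lemma ultra_and_imp (A B C : I -> Prop) :
  U A -> U B -> (forall i, A i -> B i -> C i) -> U C.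
Proof.
intros HA HB H. apply (ultra_mono U_ultra _ _ (fun i HAB => H i (proj1 HAB) (proj2 HAB))).
apply (ultra_and U_ultra); assumption.
Qed.

Lemma ultra_list_all {T : Type} (P : T -> I -> Prop) (l : list T) :
  (forall t, In t l -> U (P t)) -> U (fun i => forall t, In t l -> P t i).
Proof.
induction l as [|t l IH]; intros Hl.
- apply ultra_all. intros i t [].
- apply (ultra_and_imp _ _ _ (Hl t (or_introl eq_refl)) (IH (fun t' H => Hl t' (or_intror H)))).
  intros i Ht Hl' t' [<-|H']; auto.
Qed.

Lemma ultra_list_in {X : Type} (l : list X) (g : I -> X) :
  U (fun i => In (g i) l) -> exists x, In x l /\ U (fun i => g i = x).
Proof.
induction l as [|x l IH]; intros H.
- destruct (ultra_inhabited U_ultra H) as [i []].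
- destruct (ultra_or_not U_ultra (fun i => g i = x)) as [Hx|Hn].
  + exists x. split; [left|]; auto.
  + destruct IH as [y [Hy Uy]].
    * apply (ultra_and_imp _ _ _ H Hn). intros i [E|E] N; [congruence|auto].
    * exists y; split; [right|]; auto.
Qed.

Definition uclass {X : Type} (g : I -> X) : (I -> X) -> Prop :=
  fun h => U (fun i => g i = h i).

Definition upow (X : Type) : Type := {c : (I -> X) -> Prop | exists g, c = uclass g}.

Definition ucl {X : Type} (g : I -> X) : upow X := exist _ (uclass g) (ex_intro _ g eq_refl).

Lemma ucl_eq_iff {X : Type} (g h : I -> X) : ucl g = ucl h <-> U (fun i => g i = h i).
Proof.
split.
- intros E. assert (Eh := equal_f (f_equal (@proj1_sig _ _) E) h). simpl in Eh.
  unfold uclass in Eh. rewrite Eh. apply ultra_all. reflexivity.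
- intros H. apply subset_eq_compat. apply functional_extensionality; intros k.
  apply propositional_extensionality. unfold uclass.
  split; intros H'; apply (ultra_and_imp _ _ _ H H'); congruence.
Qed.

Lemma ucl_surjective {X : Type} (c : upow X) : exists g, c = ucl g.
Proof.
destruct c as [c [g Hg]]. exists g. subst. apply subset_eq_compat. reflexivity.
Qed.

Definition urep {X : Type} (c : upow X) : I -> X :=
  proj1_sig (constructive_indefinite_description _ (ucl_surjective c)).

Lemma ucl_urep {X : Type} (c : upow X) : ucl (urep c) = c.
Proof. symmetry. exact (proj2_sig (constructive_indefinite_description _ (ucl_surjective c))). Qed.

Definition upow_map {X Y : Type} (f : X -> Y) (c : upow X) : upow Y :=
  ucl (fun i => f (urep c i)).

Lemma upow_map_ucl {X Y : Type} (f : X -> Y) (g : I -> X) :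
  upow_map f (ucl g) = ucl (fun i => f (g i)).
Proof.
apply ucl_eq_iff. pose proof (proj1 (ucl_eq_iff _ _) (ucl_urep (ucl g))) as H.
apply (ultra_mono U_ultra _ _ (fun i E => f_equal f E) H).
Qed.

Definition uconst {X : Type} (x : X) : upow X := ucl (fun _ => x).

Lemma uconst_inj {X : Type} (x y : X) : uconst x = uconst y -> x = y.
Proof.
intros E. apply ucl_eq_iff in E. destruct (ultra_inhabited U_ultra E) as [_ Exy]. exact Exy.
Qed.

Lemma upow_map_id {X : Type} (c : upow X) : upow_map (fun x => x) c = c.
Proof. destruct (ucl_surjective c) as [g ->]. rewrite upow_map_ucl. reflexivity. Qed.

Lemma upow_map_comp {X Y Z : Type} (f : X -> Y) (g : Y -> Z) (c : upow X) :
  upow_map (fun x => g (f x)) c = upow_map g (upow_map f c).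
Proof. destruct (ucl_surjective c) as [h ->]. rewrite !upow_map_ucl. reflexivity. Qed.

Lemma upow_map_const {X Y : Type} (f : X -> Y) (x : X) : upow_map f (uconst x) = uconst (f x).
Proof. apply upow_map_ucl. Qed.

Lemma upow_const_of_finite {X : Type} : Finite X -> forall c : upow X, exists x, c = uconst x.
Proof.
intros [l Hl] c. destruct (ucl_surjective c) as [g ->].
destruct (ultra_list_in l g) as [x [_ Hx]]; [apply ultra_all; intros i; exact (Hl (g i))|].
exists x. apply ucl_eq_iff. exact Hx.
Qed.

Lemma upow_pullback {P A B Z : Type} (p1 : P -> A) (p2 : P -> B) (f : A -> Z) (g : B -> Z) :
  set_pullback p1 p2 f g ->
  set_pullback (upow_map p1) (upow_map p2) (upow_map f) (upow_map g).
Proof.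
intros Hpb. split.
- intros c. destruct (ucl_surjective c) as [h ->]. rewrite !upow_map_ucl.
  apply ucl_eq_iff, ultra_all. intros i. apply (proj1 Hpb).
- intros a b. destruct (ucl_surjective a) as [ga ->], (ucl_surjective b) as [gb ->].
  rewrite !upow_map_ucl. intros E. apply ucl_eq_iff in E.
  destruct (choice (fun i p => f (ga i) = g (gb i) -> p1 p = ga i /\ p2 p = gb i)) as [h Hh].
  { intros i. destruct (classic (f (ga i) = g (gb i))) as [Ei|Ni].
    - destruct (proj2 Hpb _ _ Ei) as [p [Hp _]]. exists p. auto.
    - destruct (ultra_inhabited U_ultra E) as [i0 E0]. destruct (proj2 Hpb _ _ E0) as [p _].
      exists p. intros Ei; contradiction. }
  exists (ucl h). split.
  + rewrite !upow_map_ucl. split; apply ucl_eq_iff.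
    * exact (ultra_mono U_ultra _ _ (fun i Ei => proj1 (Hh i Ei)) E).
    * exact (ultra_mono U_ultra _ _ (fun i Ei => proj2 (Hh i Ei)) E).
  + intros c [E1 E2]. destruct (ucl_surjective c) as [h' ->].
    rewrite upow_map_ucl in E1; rewrite upow_map_ucl in E2.
    apply ucl_eq_iff in E1, E2. apply ucl_eq_iff.
    apply (ultra_and_imp _ _ _ E (ultra_and U_ultra _ _ E1 E2)). intros i Ei [F1 F2].
    apply (set_pullback_jointly_injective Hpb); [rewrite F1 | rewrite F2]; apply Hh; exact Ei.
Qed.

End Ultrafilter.

(** * The duplicated category of sets *)

Universes w v.
Constraint w < v.

Definition J : Type@{v} := list {Y : Type@{w} & Y -> Prop}.

Lemma cone_ultrafilter_exists :
  exists U : (J -> Prop) -> Prop, is_ultrafilter U /\ forall c, U (fun j => In c j).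
Proof.
destruct (UltrafilterLemma.ultrafilter_extending J
  (fun A => exists l : J, forall j, incl l j -> A j)) as [U [HU HF]].
- exists nil. auto.
- intros A B H [l Hl]. exists l. auto.
- intros A B [l1 H1] [l2 H2]. exists (l1 ++ l2). intros j Hj. split.
  + apply H1. intros a Ha; apply Hj, in_or_app; auto.
  + apply H2. intros a Ha; apply Hj, in_or_app; auto.
- intros A [l Hl]. exists l. apply Hl, incl_refl.
- exists U. split; [exact HU|]. intros c. apply HF. exists (c :: nil).
  intros j Hj. apply Hj. left; reflexivity.
Qed.

Definition UJ : (J -> Prop) -> Prop :=
  proj1_sig (constructive_indefinite_description _ cone_ultrafilter_exists).

Lemma UJ_ultrafilter : is_ultrafilter UJ.
Proof.
exact (proj1 (proj2_sig (constructive_indefinite_description _ cone_ultrafilter_exists))).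
Qed.

Lemma UJ_cone (c : {Y : Type@{w} & Y -> Prop}) : UJ (fun j => In c j).
Proof.
exact (proj2 (proj2_sig (constructive_indefinite_description _ cone_ultrafilter_exists)) c).
Qed.

Notation star := (@upow J UJ).
Notation star_map := (@upow_map J UJ).
Notation scl := (@ucl J UJ).
Notation sconst := (@uconst J UJ).

Definition std_part {X : Type@{w}} (H : Finite X) (c : star X) : X :=
  proj1_sig (constructive_indefinite_description _ (upow_const_of_finite UJ_ultrafilter H c)).

Lemma std_part_spec {X : Type@{w}} (H : Finite X) (c : star X) : c = sconst (std_part H c).
Proof.
exact (proj2_sig (constructive_indefinite_description _ (upow_const_of_finite UJ_ultrafilter H c))).
Qed.

Lemma std_part_const {X : Type@{w}} (H : Finite X) (x : X) : std_part H (sconst x) = x.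
Proof. symmetry. apply (uconst_inj UJ_ultrafilter), std_part_spec. Qed.

(* Finite sets are kept as they are, so that iota can be the identity on them. *)
Definition tau_obj (X : Type@{w}) : Type@{v} :=
  if excluded_middle_informative (Finite X) then X else star X.

Definition to_star {X : Type@{w}} : tau_obj X -> star X :=
  match excluded_middle_informative (Finite X) as d return (if d then X else star X) -> star X with
  | left _ => fun x => sconst x
  | right _ => fun c => c
  end.

Definition of_star {X : Type@{w}} : star X -> tau_obj X :=
  match excluded_middle_informative (Finite X) as d return star X -> (if d then X else star X) with
  | left H => fun c => std_part H c
  | right _ => fun c => c
  end.

Lemma to_of_star {X : Type@{w}} (c : star X) : to_star (of_star c) = c.
Proof.
unfold to_star, of_star. destruct (excluded_middle_informative (Finite X)) as [H|H].
- symmetry. apply std_part_spec.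
- reflexivity.
Qed.

Lemma of_to_star {X : Type@{w}} (t : tau_obj X) : of_star (to_star t) = t.
Proof.
revert t. unfold tau_obj, to_star, of_star.
destruct (excluded_middle_informative (Finite X)) as [H|H]; intros t.
- apply std_part_const.
- reflexivity.
Qed.

Lemma to_star_inj {X : Type@{w}} (t t' : tau_obj X) : to_star t = to_star t' -> t = t'.
Proof. intros E. rewrite <- (of_to_star t), <- (of_to_star t'), E. reflexivity. Qed.

Definition tau_map {X Y : Type@{w}} (f : X -> Y) (t : tau_obj X) : tau_obj Y :=
  of_star (star_map f (to_star t)).

Definition SmallSets : ETCS := SetETCS@{w}.
Definition LargeSets : ETCS := SetETCS@{v}.

Definition sigma_incl : Functor SmallSets LargeSets.
refine {| fobj := fun X : SmallSets => (X : LargeSets);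
          fmap := fun a b (f : Hom (c0:=SmallSets) a b) => (f : Hom (c0:=LargeSets) a b) |};
  reflexivity.
Defined.

Definition tau_star : Functor SmallSets LargeSets.
refine {| fobj := fun X : SmallSets => (tau_obj X : LargeSets);
          fmap := fun a b (f : Hom (c0:=SmallSets) a b) =>
                    (tau_map f : Hom (c0:=LargeSets) (tau_obj a) (tau_obj b)) |}.
- intros a. apply functional_extensionality; intros t. unfold tau_map. simpl.
  rewrite (upow_map_id UJ_ultrafilter). apply of_to_star.
- intros a b c f g. apply functional_extensionality; intros t. unfold tau_map. simpl.
  rewrite to_of_star, (upow_map_comp UJ_ultrafilter). reflexivity.
Defined.

Definition iota_const (X : SmallSets) : Hom (c0:=LargeSets) (sigma_incl X) (tau_star X) :=
  fun x : X => of_star (sconst x).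

Lemma sigma_incl_lim : preserves_finite_limits sigma_incl.
Proof.
split.
- intros t Ht. apply (proj2 (set_terminal_iff@{v} _)). exact (proj1 (set_terminal_iff@{w} t) Ht).
- intros P A B Z p1 p2 f g H. apply (proj2 (set_pullback_iff@{v} _ _ _ _)).
  exact (proj1 (set_pullback_iff@{w} _ _ _ _) H).
Qed.

Lemma sigma_incl_exp : preserves_exponentials sigma_incl.
Proof.
intros A B E P p1 p2 ev H. apply is_exponential_of_set_exponential@{v}.
exact (set_exponential_of_is_exponential@{w} _ _ _ H).
Qed.

Lemma sigma_incl_nno : preserves_nno sigma_incl.
Proof.
intros t N z s Ht Hn. apply is_nno_of_set_nno@{v}. exact (set_nno_of_is_nno@{w} _ _ _ _ Ht Hn).
Qed.

Lemma tau_star_one : tau_star (one SmallSets) = one LargeSets.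
Proof.
simpl. unfold tau_obj. destruct (excluded_middle_informative (Finite unit)) as [_|n].
- reflexivity.
- exfalso. apply n. exists (tt :: nil). intros []. left; reflexivity.
Qed.

Lemma finite_Prop : Finite Prop.
Proof.
exists (True :: False :: nil). intros P. destruct (classic P) as [H|H].
- left. apply propositional_extensionality; tauto.
- right; left. apply propositional_extensionality; tauto.
Qed.

Lemma tau_star_Omega : tau_star (Omega SmallSets) = Omega LargeSets.
Proof.
simpl. unfold tau_obj. destruct (excluded_middle_informative (Finite Prop)) as [_|n].
- reflexivity.
- exfalso. exact (n finite_Prop).
Qed.

Lemma tau_star_lim : preserves_finite_limits tau_star.
Proof.
split.
- intros t Ht. apply (proj2 (set_terminal_iff@{v} _)).
  destruct (proj1 (set_terminal_iff@{w} t) Ht) as [t0 H0].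
  exists (of_star (sconst t0)). intros y. apply to_star_inj. rewrite to_of_star.
  destruct (ucl_surjective (to_star y)) as [g ->].
  apply (ucl_eq_iff UJ_ultrafilter), (ultra_all UJ_ultrafilter). intros j; apply H0.
- intros P A B Z p1 p2 f g H. apply (proj2 (set_pullback_iff@{v} _ _ _ _)).
  destruct (upow_pullback UJ_ultrafilter _ _ _ _ (proj1 (set_pullback_iff@{w} _ _ _ _) H))
    as [Hc Hu].
  simpl. unfold tau_map. split.
  + intros x. rewrite !to_of_star, Hc. reflexivity.
  + intros a b E. apply (f_equal to_star) in E. rewrite !to_of_star in E.
    destruct (Hu _ _ E) as [c [[C1 C2] Cu]].
    exists (of_star c). split.
    * rewrite !to_of_star, C1, C2, !of_to_star. split; reflexivity.
    * intros x' [X1 X2]. apply to_star_inj. rewrite to_of_star. apply Cu.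
      split; [rewrite <- X1 | rewrite <- X2]; rewrite to_of_star; reflexivity.
Qed.

Lemma iota_const_natural (X Y : SmallSets) (f : Hom X Y) :
  iota_const Y ⊚ fmap sigma_incl f = fmap tau_star f ⊚ iota_const X.
Proof.
apply functional_extensionality; intros x. simpl. unfold iota_const, tau_map.
rewrite to_of_star, (upow_map_const UJ_ultrafilter). reflexivity.
Qed.

Lemma iota_const_finite (X : SmallSets) : finite_obj X ->
  exists e : sigma_incl X = tau_star X, iota_const X = eq_hom e.
Proof.
intros HX. apply set_finite_obj_iff in HX. simpl. unfold iota_const, tau_obj, of_star.
destruct (excluded_middle_informative (Finite X)) as [H|H]; [|contradiction].
exists eq_refl. apply functional_extensionality; intros x. apply std_part_const.
Qed.

Definition duplicated_sets : DupCat.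
refine {| S := SmallSets; Sh := LargeSets; sigma := sigma_incl; tau := tau_star; iota := iota_const;
  sigma_lim := sigma_incl_lim; sigma_one := eq_refl; sigma_Omega := eq_refl;
  sigma_exp := sigma_incl_exp; sigma_nno := sigma_incl_nno; tau_lim := tau_star_lim;
  tau_one := tau_star_one; tau_Omega := tau_star_Omega; iota_nat := iota_const_natural;
  iota_finite := iota_const_finite |}.
reflexivity.
Defined.

(** * Compactness *)

Lemma tau_Omega_value (e : tau_obj Prop = Prop) (g : J -> Prop) :
  (eq_hom (C:=LargeSets) (a:=tau_obj Prop) (b:=Prop) e (of_star (scl g)) : Prop) <-> UJ g.
Proof.
revert e. unfold tau_obj, of_star.
destruct (excluded_middle_informative (Finite Prop)) as [H|H]; intros e;
  [|exfalso; exact (H finite_Prop)].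
rewrite (proof_irrelevance _ e eq_refl). simpl.
pose proof (std_part_spec H (scl g)) as Hs. set (x := std_part H (scl g)) in *.
apply (ucl_eq_iff UJ_ultrafilter) in Hs. split.
- intros Hx.
  exact (ultra_mono UJ_ultrafilter _ _ (fun j (Ej : g j = x) => eq_ind_r (fun P => P) Hx Ej) Hs).
- intros Hg. apply NNPP. intros Nx.
  destruct (ultra_inhabited UJ_ultrafilter (ultra_and UJ_ultrafilter _ _ Hs Hg)) as [j [Ej Gj]].
  rewrite Ej in Gj. contradiction.
Qed.

Lemma standard_char_value (X : Type@{w}) (f : X -> Prop) (g : J -> X) :
  ((eq_hom (tau_Omega duplicated_sets) ⊚ fmap (tau duplicated_sets) (a:=X) f)
     (of_star (scl g)) : Prop) <-> UJ (fun j => f (g j)).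
Proof.
simpl. unfold tau_map. rewrite to_of_star, (upow_map_ucl UJ_ultrafilter). apply tau_Omega_value.
Qed.

Lemma star_saturated (X : Type@{w}) (F : (X -> Prop) -> Prop) :
  (forall fs, (forall f, In f fs -> F f) -> exists x, forall f, In f fs -> f x) ->
  exists g : J -> X, forall f, F f -> UJ (fun j => f (g j)).
Proof.
intros Hfip.
assert (Hj : forall j : J, exists x : X, forall f, In (existT _ X f) j -> F f -> f x).
{ intros j.
  destruct (list_functional_image
    (fun c f => c = existT (fun Y : Type@{w} => Y -> Prop) X f /\ F f) j) as [fs Hfs].
  { intros c f f' [-> _] [E _]. exact (inj_pair2 _ _ _ _ _ E). }
  destruct (Hfip fs) as [x Hx].
  { intros f Hf. apply Hfs in Hf. destruct Hf as [c [_ [_ Ff]]]. exact Ff. }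
  exists x. intros f Hin Ff. apply Hx, Hfs. exists (existT _ X f). auto. }
destruct (choice _ Hj) as [g Hg]. exists g. intros f Ff.
exact (ultra_mono UJ_ultrafilter _ _ (fun j Hin => Hg j f Hin Ff) (UJ_cone (existT _ X f))).
Qed.

Section Compactness.
Local Notation D := duplicated_sets.
Context {Lam X : S D} {E P : Sh D} (p1 : Hom P E) (p2 : Hom P (tau D X))
  (ev : Hom P (Omega (Sh D))) (A : Hom (sigma D Lam) E).

Definition standard_member (f : X -> Prop) : Prop :=
  exists (l : Hom (one (Sh D)) (sigma D Lam)) chi,
    transpose_of p1 p2 (A ⊚ l) ev chi /\ eq_hom (tau_Omega D) ⊚ fmap (tau D) f = chi.

Hypothesis fip : forall (F : S D) (m : Hom F Lam), mono m -> finite_obj F ->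
  exists x : Hom (one (Sh D)) (tau D X),
    forall (l : Hom (one (Sh D)) (sigma D Lam)) chi,
      (exists y : Hom (one (Sh D)) (sigma D F), fmap (sigma D) m ⊚ y = l) ->
      transpose_of p1 p2 (A ⊚ l) ev chi -> lies_in x chi.

Lemma standard_members_fip (fs : list (X -> Prop)) :
  (forall f, In f fs -> standard_member f) -> exists x : X, forall f, In f fs -> f x.
Proof.
intros Hfs.
destruct (list_witnesses (fun f (lam : Lam) => exists l chi, l tt = lam /\
    transpose_of p1 p2 (A ⊚ l) ev chi /\ eq_hom (tau_Omega D) ⊚ fmap (tau D) f = chi) fs)
  as [ls Hls].
{ intros f Hf. destruct (Hfs f Hf) as [l [chi H]]. exists (l tt), l, chi. auto. }
pose (m := (fun x => proj1_sig x) : Hom (c0:=S D) {x : Lam | In x ls} Lam).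
assert (Hm : mono m).
{ apply set_mono_iff. intros [x Hx] [y Hy] Exy. simpl in Exy. subst.
  apply subset_eq_compat. reflexivity. }
destruct (fip _ m Hm (proj2 (set_finite_obj_iff _) (finite_in_list ls))) as [x0 Hx0].
pose (g := urep (to_star (x0 tt))).
assert (Ex0 : x0 tt = of_star (scl g)) by (unfold g; rewrite ucl_urep, of_to_star; reflexivity).
assert (Hall : forall f, In f fs -> UJ (fun j => f (g j))).
{ intros f Hf. destruct (Hls f Hf) as [lam [Hin [l [chi [Hl [Htr Hstd]]]]]].
  assert (Hlies : lies_in x0 chi).
  { apply (Hx0 l chi); [|exact Htr]. exists (fun _ => exist _ lam Hin).
    apply functional_extensionality; intros []. exact (eq_sym Hl). }
  rewrite <- Hstd in Hlies. apply (standard_char_value X f g). rewrite <- Ex0.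
  exact (eq_ind_r (fun Q : Prop => Q) I (equal_f Hlies tt)). }
destruct (ultra_inhabited UJ_ultrafilter
  (ultra_list_all UJ_ultrafilter (fun f j => f (g j)) fs Hall)) as [j Hj].
exists (g j). exact Hj.
Qed.

End Compactness.

Lemma duplicated_sets_compact : compactness duplicated_sets.
Proof.
(* Only the characteristic maps of the A_lambda matter. *)
intros Lam X E P p1 p2 ev _ A Hstd Hfip.
destruct (star_saturated X (standard_member p1 p2 ev A) (standard_members_fip p1 p2 ev A Hfip))
  as [g Hg].
exists (fun _ => of_star (scl g)). intros l chi Htr.
destruct (Hstd l chi Htr) as [f Hf].
apply functional_extensionality; intros u. simpl. rewrite <- Hf.
apply propositional_extensionality. split; [intros; exact I|intros _].
apply (standard_char_value X f g), Hg. exists l, chi. auto.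
Qed.

Theorem mainTheorem7 : exists D : DupCat, compactness D.
Proof. exists duplicated_sets. exact duplicated_sets_compact. Qed.
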